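(* Let $(\mathfrak{d},\mathfrak{d}_2)$ be a derivation scheme, consisting of a category $C$, a set $\mathfrak{d}_2$, and two functors $\mathfrak{d}(d^0),\mathfrak{d}(d^1)\colon \mathfrak{d}_2\times\mathsf{2}\to C$ that agree on objects. Then the $2$-category $\mathcal{F}_{2\text{-}\mathrm{Der}}(\mathfrak{d})$ freely generated by $(\mathfrak{d},\mathfrak{d}_2)$ is isomorphic to the coinserter, computed in the $2$-category $2\mathbf{Cat}$, of the parallel pair of $2$-functors $\mathfrak{d}(d^1),\mathfrak{d}(d^0)\colon \mathfrak{d}_2\times\mathsf{2}\rightrightarrows C$. Here the categories $\mathfrak{d}_2\times\mathsf{2}$ and $C$ are regarded as locally discrete $2$-categories. Moreover, this construction gives a functor $\mathcal{F}_{2\text{-}\mathrm{Der}}$ from derivation schemes to $2$-categories.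
   Context: Let $\mathsf{2}$ denote the category $0\to 1$. The set $\mathfrak{d}_2$ is regarded as a discrete category. A derivation scheme consists of a category $C$, a set $\mathfrak{d}_2$, and functors $\mathfrak{d}(d^0),\mathfrak{d}(d^1)\colon\mathfrak{d}_2\times\mathsf{2}\to C$ such that $\mathfrak{d}(d^0)(\alpha,i)=\mathfrak{d}(d^1)(\alpha,i)$ for every $\alpha\in\mathfrak{d}_2$ and $i\in\{0,1\}$. Thus each $\alpha$ determines parallel morphisms $s_\alpha=\mathfrak{d}(d^1)(\alpha,0\to1)$ and $t_\alpha=\mathfrak{d}(d^0)(\alpha,0\to1)$ of $C$. Morphisms of derivation schemes are the evident commuting maps. The free $2$-category $\mathcal{F}_{2\text{-}\mathrm{Der}}(\mathfrak{d})$ is characterised by the following universal property. A $2$-functor $\mathcal{F}_{2\text{-}\mathrm{Der}}(\mathfrak{d})\to X$ corresponds bijectively to a pair consisting of - a functor $G_1\colon C\to X$ (into the underlying category of $X$), and - a family of $2$-cells $G_2(\alpha)\colon G_1(s_\alpha)\Rightarrow G_1(t_\alpha)$ in $X$, one for each $\alpha\in\mathfrak{d}_2$. Let $F,G\colon A\to B$ be $2$-functors that agree on objects. An icon $\theta\colon F\Rightarrow G$ is a family of $2$-cells $\theta_f\colon Ff\Rightarrow Gf$, one for each $1$-cell $f$ of $A$, satisfying three conditions: - $\theta_{\mathrm{id}}=\mathrm{id}$; - $\theta_{g f}=\theta_g*\theta_f$ (horizontal composition); - $G\sigma\cdot\theta_f=\theta_{f'}\cdot F\sigma$ for every $2$-cell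 $\sigma\colon f\Rightarrow f'$. $2\mathbf{Cat}$ is the $2$-category whose objects are $2$-categories, whose $1$-cells are $2$-functors, and whose $2$-cells are icons. Let $P,Q\colon A\rightrightarrows B$ be $1$-cells in a $2$-category $\mathcal{K}$. Their coinserter is an object $L$ equipped with a $1$-cell $q\colon B\to L$ and a $2$-cell $\lambda\colon qP\Rightarrow qQ$, such that for every object $X$, composition with $(q,\lambda)$ induces an isomorphism of categories from $\mathcal{K}(L,X)$ to the category described as follows: - objects are pairs $(r\colon B\to X,\ \rho\colon rP\Rightarrow rQ)$; - morphisms are $2$-cells $\tau\colon r\Rightarrow r'$ with $\rho'\cdot(\tau P)=(\tau Q)\cdot\rho$. *)

(* Categories and strict 2-categories are presented "globularly" (unindexed):
   one type of objects, one type of 1-cells, one type of 2-cells, with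
   source/target maps and total composition operations whose laws are only
   required on composable data. *)

Record Category := {
  cOb : Type; cHom : Type;
  cdom : cHom -> cOb; ccod : cHom -> cOb;
  cid : cOb -> cHom; ccomp : cHom -> cHom -> cHom;  (* ccomp g f = g o f *)
  cdom_id : forall x, cdom (cid x) = x;
  ccod_id : forall x, ccod (cid x) = x;
  cdom_comp : forall g f, ccod f = cdom g -> cdom (ccomp g f) = cdom f;
  ccod_comp : forall g f, ccod f = cdom g -> ccod (ccomp g f) = ccod g;
  ccomp_assoc : forall h g f, ccod f = cdom g -> ccod g = cdom h ->
      ccomp h (ccomp g f) = ccomp (ccomp h g) f;
  ccomp_idl : forall f, ccomp (cid (ccod f)) f = f;
  ccomp_idr : forall f, ccomp f (cid (cdom f)) = f }.

Record FunData (C D : Category) := {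
  fo : cOb C -> cOb D; fa : cHom C -> cHom D }.
Arguments fo {C D} _ _.
Arguments fa {C D} _ _.

Definition is_functor {C D : Category} (F : FunData C D) : Prop :=
  (forall f, cdom D (fa F f) = fo F (cdom C f)) /\
  (forall f, ccod D (fa F f) = fo F (ccod C f)) /\
  (forall x, fa F (cid C x) = cid D (fo F x)) /\
  (forall g f, ccod C f = cdom C g -> fa F (ccomp C g f) = ccomp D (fa F g) (fa F f)).

Definition fcomp {C D E : Category} (G : FunData D E) (F : FunData C D) : FunData C E :=
  {| fo := fun x => fo G (fo F x); fa := fun f => fa G (fa F f) |}.

Definition fid (C : Category) : FunData C C := {| fo := fun x => x; fa := fun f => f |}.

Record TwoCat := {
  Ob : Type; Hom : Type; Cell : Type;
  dom1 : Hom -> Ob; cod1 : Hom -> Ob;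
  dom2 : Cell -> Hom; cod2 : Cell -> Hom;
  id1 : Ob -> Hom; comp1 : Hom -> Hom -> Hom;          (* comp1 g f = g o f *)
  id2 : Hom -> Cell;
  vcomp : Cell -> Cell -> Cell;                          (* vcomp b a = b . a *)
  hcomp : Cell -> Cell -> Cell;                          (* hcomp b a = b * a *)
  dom1_id1 : forall x, dom1 (id1 x) = x;
  cod1_id1 : forall x, cod1 (id1 x) = x;
  dom1_comp1 : forall g f, cod1 f = dom1 g -> dom1 (comp1 g f) = dom1 f;
  cod1_comp1 : forall g f, cod1 f = dom1 g -> cod1 (comp1 g f) = cod1 g;
  comp1_assoc : forall h g f, cod1 f = dom1 g -> cod1 g = dom1 h ->
      comp1 h (comp1 g f) = comp1 (comp1 h g) f;
  comp1_idl : forall f, comp1 (id1 (cod1 f)) f = f;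
  comp1_idr : forall f, comp1 f (id1 (dom1 f)) = f;
  dom1_cell : forall a, dom1 (dom2 a) = dom1 (cod2 a);
  cod1_cell : forall a, cod1 (dom2 a) = cod1 (cod2 a);
  dom2_id2 : forall f, dom2 (id2 f) = f;
  cod2_id2 : forall f, cod2 (id2 f) = f;
  dom2_vcomp : forall b a, cod2 a = dom2 b -> dom2 (vcomp b a) = dom2 a;
  cod2_vcomp : forall b a, cod2 a = dom2 b -> cod2 (vcomp b a) = cod2 b;
  vcomp_assoc : forall c b a, cod2 a = dom2 b -> cod2 b = dom2 c ->
      vcomp c (vcomp b a) = vcomp (vcomp c b) a;
  vcomp_idl : forall a, vcomp (id2 (cod2 a)) a = a;
  vcomp_idr : forall a, vcomp a (id2 (dom2 a)) = a;
  dom2_hcomp : forall b a, cod1 (dom2 a) = dom1 (dom2 b) ->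
      dom2 (hcomp b a) = comp1 (dom2 b) (dom2 a);
  cod2_hcomp : forall b a, cod1 (dom2 a) = dom1 (dom2 b) ->
      cod2 (hcomp b a) = comp1 (cod2 b) (cod2 a);
  hcomp_assoc : forall c b a, cod1 (dom2 a) = dom1 (dom2 b) ->
      cod1 (dom2 b) = dom1 (dom2 c) -> hcomp c (hcomp b a) = hcomp (hcomp c b) a;
  hcomp_idl : forall a, hcomp (id2 (id1 (cod1 (dom2 a)))) a = a;
  hcomp_idr : forall a, hcomp a (id2 (id1 (dom1 (dom2 a)))) = a;
  hcomp_id2 : forall g f, cod1 f = dom1 g -> hcomp (id2 g) (id2 f) = id2 (comp1 g f);
  interchange : forall b' b a' a, cod2 a = dom2 a' -> cod2 b = dom2 b' ->
      cod1 (dom2 a) = dom1 (dom2 b) ->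
      hcomp (vcomp b' b) (vcomp a' a) = vcomp (hcomp b' a') (hcomp b a) }.

Arguments dom1 {t} _. Arguments cod1 {t} _. Arguments dom2 {t} _. Arguments cod2 {t} _.
Arguments id1 {t} _. Arguments comp1 {t} _ _. Arguments id2 {t} _.
Arguments vcomp {t} _ _. Arguments hcomp {t} _ _.

Definition U (X : TwoCat) : Category :=
  {| cOb := Ob X; cHom := Hom X; cdom := @dom1 X; ccod := @cod1 X;
     cid := @id1 X; ccomp := @comp1 X;
     cdom_id := dom1_id1 X; ccod_id := cod1_id1 X;
     cdom_comp := dom1_comp1 X; ccod_comp := cod1_comp1 X;
     ccomp_assoc := comp1_assoc X; ccomp_idl := comp1_idl X; ccomp_idr := comp1_idr X |}.

Record TwoFunData (A B : TwoCat) := {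
  F0 : Ob A -> Ob B; F1 : Hom A -> Hom B; F2 : Cell A -> Cell B }.
Arguments F0 {A B} _ _. Arguments F1 {A B} _ _. Arguments F2 {A B} _ _.

Definition is_2functor {A B : TwoCat} (F : TwoFunData A B) : Prop :=
  (forall f, dom1 (F1 F f) = F0 F (dom1 f)) /\
  (forall f, cod1 (F1 F f) = F0 F (cod1 f)) /\
  (forall a, dom2 (F2 F a) = F1 F (dom2 a)) /\
  (forall a, cod2 (F2 F a) = F1 F (cod2 a)) /\
  (forall x, F1 F (id1 x) = id1 (F0 F x)) /\
  (forall g f, cod1 f = dom1 g -> F1 F (comp1 g f) = comp1 (F1 F g) (F1 F f)) /\
  (forall f, F2 F (id2 f) = id2 (F1 F f)) /\
  (forall b a, cod2 a = dom2 b -> F2 F (vcomp b a) = vcomp (F2 F b) (F2 F a)) /\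
  (forall b a, cod1 (dom2 a) = dom1 (dom2 b) ->
      F2 F (hcomp b a) = hcomp (F2 F b) (F2 F a)).

Definition tfcomp {A B C : TwoCat} (G : TwoFunData B C) (F : TwoFunData A B) : TwoFunData A C :=
  {| F0 := fun x => F0 G (F0 F x); F1 := fun f => F1 G (F1 F f);
     F2 := fun a => F2 G (F2 F a) |}.

Definition tfid (A : TwoCat) : TwoFunData A A :=
  {| F0 := fun x => x; F1 := fun f => f; F2 := fun a => a |}.

Definition Ufun {A B : TwoCat} (F : TwoFunData A B) : FunData (U A) (U B) :=
  Build_FunData (U A) (U B) (F0 F) (F1 F).

Definition is_icon {A B : TwoCat} (F G : TwoFunData A B) (th : Hom A -> Cell B) : Prop :=
  (forall x, F0 F x = F0 G x) /\
  (forall f, dom2 (th f) = F1 F f) /\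
  (forall f, cod2 (th f) = F1 G f) /\
  (forall x, th (id1 x) = id2 (F1 F (id1 x))) /\
  (forall g f, cod1 f = dom1 g -> th (comp1 g f) = hcomp (th g) (th f)) /\
  (forall s, vcomp (F2 G s) (th (dom2 s)) = vcomp (th (cod2 s)) (F2 F s)).

(* Coinserter of P, Q : A => B in 2Cat (objects: 2-categories, 1-cells:
   2-functors, 2-cells: icons).  Composition with (q, lam) induces an
   isomorphism of categories 2Cat(L, X) -> {(r, rho)}, expressed as
   bijective on objects and bijective on each hom-set. *)
Definition is_coinserter {A B : TwoCat} (P Q : TwoFunData A B)
    (L : TwoCat) (q : TwoFunData B L) (lam : Hom A -> Cell L) : Prop :=
  is_2functor q /\ is_icon (tfcomp q P) (tfcomp q Q) lam /\
  forall X : TwoCat,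
    (forall (r : TwoFunData B X) (rho : Hom A -> Cell X),
        is_2functor r -> is_icon (tfcomp r P) (tfcomp r Q) rho ->
        exists H : TwoFunData L X,
          is_2functor H /\ tfcomp H q = r /\ (forall f, F2 H (lam f) = rho f) /\
          (forall H' : TwoFunData L X, is_2functor H' -> tfcomp H' q = r ->
              (forall f, F2 H' (lam f) = rho f) -> H' = H)) /\
    (forall H H' : TwoFunData L X, is_2functor H -> is_2functor H' ->
        (forall t1 t2 : Hom L -> Cell X, is_icon H H' t1 -> is_icon H H' t2 ->
            (forall g, t1 (F1 q g) = t2 (F1 q g)) -> forall f, t1 f = t2 f) /\
        (forall t' : Hom B -> Cell X, is_icon (tfcomp H q) (tfcomp H' q) t' ->
            (forall f, vcomp (F2 H' (lam f)) (t' (F1 P f)) =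
                       vcomp (t' (F1 Q f)) (F2 H (lam f))) ->
            exists t : Hom L -> Cell X, is_icon H H' t /\
              forall g, t (F1 q g) = t' g)).

Section LD.
Variable C : Category.

Definition LD : TwoCat.
Proof.
  refine {| Ob := cOb C; Hom := cHom C; Cell := cHom C;
            dom1 := cdom C; cod1 := ccod C; dom2 := fun f => f; cod2 := fun f => f;
            id1 := cid C; comp1 := ccomp C; id2 := fun f => f;
            vcomp := fun b a => a; hcomp := ccomp C |};
  try solve [apply (cdom_id C) | apply (ccod_id C) | apply (cdom_comp C)
            | apply (ccod_comp C) | apply (ccomp_assoc C) | apply (ccomp_idl C)
            | apply (ccomp_idr C) | reflexivity
            | (simpl; intros; subst; reflexivity) | (simpl; intros; assumption)].
Defined.
End LD.

Definition LDfun {C D : Category} (F : FunData C D) : TwoFunData (LD C) (LD D) :=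
  Build_TwoFunData (LD C) (LD D) (fo F) (fa F) (fa F).

Inductive Arr2 := a00 | a01 | a11.  (* id_0, 0 -> 1, id_1 *)
Definition a2dom (a : Arr2) : bool := match a with a11 => true | _ => false end.
Definition a2cod (a : Arr2) : bool := match a with a00 => false | _ => true end.
Definition a2id (b : bool) : Arr2 := if b then a11 else a00.
Definition a2comp (g f : Arr2) : Arr2 :=
  match g with a01 => a01 | _ => f end.

Definition DerCat (S : Type) : Category.
Proof.
  refine {| cOb := S * bool; cHom := S * Arr2;
            cdom := fun p => (fst p, a2dom (snd p));
            ccod := fun p => (fst p, a2cod (snd p));
            cid := fun x => (fst x, a2id (snd x));
            ccomp := fun g f => (fst f, a2comp (snd g) (snd f)) |}.
  - intros [s []]; reflexivity.
  - intros [s []]; reflexivity.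
  - intros [t g] [s f] H; simpl in *; injection H; intros; subst;
      destruct g, f; simpl in *; try discriminate; reflexivity.
  - intros [t g] [s f] H; simpl in *; injection H; intros; subst;
      destruct g, f; simpl in *; try discriminate; reflexivity.
  - intros [u h] [t g] [s f] H1 H2; simpl in *; injection H1; injection H2; intros; subst;
      destruct h, g, f; simpl in *; try discriminate; reflexivity.
  - intros [s []]; reflexivity.
  - intros [s []]; reflexivity.
Defined.

Record DerScheme := {
  dC : Category;
  dS : Type;
  dd0 : FunData (DerCat dS) dC;
  dd1 : FunData (DerCat dS) dC;
  dd0_ok : is_functor dd0;
  dd1_ok : is_functor dd1;
  dd_agree : forall x, fo dd0 x = fo dd1 x }.

Definition sder (d : DerScheme) (al : dS d) : cHom (dC d) := fa (dd1 d) (al, a01).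
Definition tder (d : DerScheme) (al : dS d) : cHom (dC d) := fa (dd0 d) (al, a01).

Definition is_free (d : DerScheme) (L : TwoCat)
    (e : FunData (dC d) (U L)) (e2 : dS d -> Cell L) : Prop :=
  is_functor e /\
  (forall al, dom2 (e2 al) = fa e (sder d al) /\ cod2 (e2 al) = fa e (tder d al)) /\
  forall (X : TwoCat) (G1 : FunData (dC d) (U X)) (G2 : dS d -> Cell X),
    is_functor G1 ->
    (forall al, dom2 (G2 al) = fa G1 (sder d al) /\ cod2 (G2 al) = fa G1 (tder d al)) ->
    exists H : TwoFunData L X,
      is_2functor H /\ fcomp (Ufun H) e = G1 /\ (forall al, F2 H (e2 al) = G2 al) /\
      (forall H' : TwoFunData L X, is_2functor H' -> fcomp (Ufun H') e = G1 ->
          (forall al, F2 H' (e2 al) = G2 al) -> H' = H).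

Definition qof {C : Category} {L : TwoCat} (e : FunData C (U L)) : TwoFunData (LD C) L :=
  Build_TwoFunData (LD C) L (fo e) (fa e) (fun f => @id2 L (fa e f)).

Definition lamof (d : DerScheme) {L : TwoCat} (e : FunData (dC d) (U L))
    (e2 : dS d -> Cell L) : cHom (DerCat (dS d)) -> Cell L :=
  fun p => match snd p with
           | a01 => e2 (fst p)
           | _ => @id2 L (fa e (fa (dd1 d) p))
           end.

Definition times2 {S S' : Type} (k : S -> S') : FunData (DerCat S) (DerCat S') :=
  Build_FunData (DerCat S) (DerCat S') (fun x : S * bool => (k (fst x), snd x))
    (fun p : S * Arr2 => (k (fst p), snd p)).

Definition is_scheme_mor (d d' : DerScheme) (h : FunData (dC d) (dC d'))
    (k : dS d -> dS d') : Prop :=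
  is_functor h /\ fcomp h (dd0 d) = fcomp (dd0 d') (times2 k) /\
  fcomp h (dd1 d) = fcomp (dd1 d') (times2 k).

Definition is_over {d d' : DerScheme} {L L' : TwoCat}
    (e : FunData (dC d) (U L)) (e2 : dS d -> Cell L)
    (e' : FunData (dC d') (U L')) (e2' : dS d' -> Cell L')
    (G : TwoFunData L L') (h : FunData (dC d) (dC d')) (k : dS d -> dS d') : Prop :=
  fcomp (Ufun G) e = fcomp e' h /\ forall al, F2 G (e2 al) = e2' (k al).

From Stdlib Require Import ClassicalEpsilon ProofIrrelevance FunctionalExtensionality.

(* An icon H => H' : L -> X is the same thing as a 2-functor from L into the
   2-category [Squares X], whose 1-cells are the 2-cells of X and whose 2-cells
   are commuting squares of them, lying over H and H' under the two
   projections.  Hence the universal property of the free 2-category F(d)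
   controls icons out of F(d) as well as 2-functors.  A 2-functor out of F(d)
   is a functor on C with a 2-cell for each generator alpha; this is exactly a
   pair (r, rho), because an icon rho out of d_2 x 2 is determined by its
   components at the arrows (alpha, 0 -> 1).  An icon between two 2-functors
   out of F(d) is a family of 2-cells indexed by C (an icon after
   precomposition with q) together with a commuting square for each
   generator, which is exactly the compatibility with lambda.  Functoriality
   in the derivation scheme is the uniqueness half of the universal property. *)


Lemma fun_data_ext {C D : Category} (F G : FunData C D) :
  (forall x, fo F x = fo G x) -> (forall f, fa F f = fa G f) -> F = G.
Proof. destruct F, G; simpl; intros; f_equal; apply functional_extensionality; auto. Qed.

Lemma two_fun_data_ext {A B : TwoCat} (F G : TwoFunData A B) :
  (forall x, F0 F x = F0 G x) -> (forall f, F1 F f = F1 G f) ->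
  (forall a, F2 F a = F2 G a) -> F = G.
Proof. destruct F, G; simpl; intros; f_equal; apply functional_extensionality; auto. Qed.

Lemma fcomp_functor {C D E : Category} (G : FunData D E) (F : FunData C D) :
  is_functor F -> is_functor G -> is_functor (fcomp G F).
Proof.
  intros (f1 & f2 & f3 & f4) (g1 & g2 & g3 & g4); repeat split; simpl; intros.
  - now rewrite g1, f1.
  - now rewrite g2, f2.
  - now rewrite f3, g3.
  - rewrite f4 by assumption. apply g4. now rewrite f2, f1, H.
Qed.

Lemma tfcomp_2functor {A B C : TwoCat} (G : TwoFunData B C) (F : TwoFunData A B) :
  is_2functor F -> is_2functor G -> is_2functor (tfcomp G F).
Proof.
  intros (f1 & f2 & f3 & f4 & f5 & f6 & f7 & f8 & f9)
         (g1 & g2 & g3 & g4 & g5 & g6 & g7 & g8 & g9); repeat split; simpl; intros.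
  - now rewrite g1, f1.
  - now rewrite g2, f2.
  - now rewrite g3, f3.
  - now rewrite g4, f4.
  - now rewrite f5, g5.
  - rewrite f6 by assumption. apply g6. now rewrite f2, f1, H.
  - now rewrite f7, g7.
  - rewrite f8 by assumption. apply g8. now rewrite f4, f3, H.
  - rewrite f9 by assumption. apply g9. now rewrite !f3, f2, f1, H.
Qed.

Lemma Ufun_functor {A B : TwoCat} (H : TwoFunData A B) :
  is_2functor H -> is_functor (Ufun H).
Proof. intros (h1 & h2 & _ & _ & h5 & h6 & _); repeat split; assumption. Qed.

Lemma hcomposable_cod2 (X : TwoCat) (a b : Cell X) :
  cod1 (dom2 a) = dom1 (dom2 b) -> cod1 (cod2 a) = dom1 (cod2 b).
Proof. now rewrite <- cod1_cell, <- dom1_cell. Qed.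

Lemma hcomp_id1l (X : TwoCat) (a : Cell X) (y : Ob X) :
  cod1 (dom2 a) = y -> hcomp (id2 (id1 y)) a = a.
Proof. intros <-; apply hcomp_idl. Qed.

Lemma hcomp_id1r (X : TwoCat) (a : Cell X) (y : Ob X) :
  dom1 (dom2 a) = y -> hcomp a (id2 (id1 y)) = a.
Proof. intros <-; apply hcomp_idr. Qed.

Lemma fa_congr {C D : Category} {F G : FunData C D} (E : F = G) f : fa F f = fa G f.
Proof. now rewrite E. Qed.
Lemma fo_congr {C D : Category} {F G : FunData C D} (E : F = G) x : fo F x = fo G x.
Proof. now rewrite E. Qed.

(* The operations of a 2-category are total: on non-composable arguments a
   composite is given a junk value through this case distinction. *)
Definition if_holds {P : Prop} {T : Type} (f : P -> T) (otherwise : T) : T :=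
  match excluded_middle_informative P with left p => f p | right _ => otherwise end.

Lemma if_holds_eq {P : Prop} {T : Type} (f : P -> T) (otherwise : T) (p : P) :
  if_holds f otherwise = f p.
Proof.
  unfold if_holds; destruct (excluded_middle_informative P) as [p' | np].
  - now rewrite (proof_irrelevance P p' p).
  - contradiction.
Qed.

Section Squares.
Variable X : TwoCat.

(* A 2-cell from [sq_dom] to [sq_cod]; under an icon [t : H => H'] a 2-cell
   [s] of the source goes to the naturality square with sides [H s], [H' s]. *)
Record Square := mkSquare {
  sq_dom : Cell X; sq_cod : Cell X; sq_left : Cell X; sq_right : Cell X;
  sq_left_dom : dom2 sq_left = dom2 sq_dom;
  sq_left_cod : cod2 sq_left = dom2 sq_cod;
  sq_right_dom : dom2 sq_right = cod2 sq_dom;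
  sq_right_cod : cod2 sq_right = cod2 sq_cod;
  sq_commutes : vcomp sq_right sq_dom = vcomp sq_cod sq_left }.

Lemma square_eq (a b : Square) :
  sq_dom a = sq_dom b -> sq_cod a = sq_cod b ->
  sq_left a = sq_left b -> sq_right a = sq_right b -> a = b.
Proof. destruct a, b; simpl; intros; subst; f_equal; apply proof_irrelevance. Qed.

Lemma sq_left_dom1 a : dom1 (dom2 (sq_left a)) = dom1 (dom2 (sq_dom a)).
Proof. now rewrite sq_left_dom. Qed.
Lemma sq_left_cod1 a : cod1 (dom2 (sq_left a)) = cod1 (dom2 (sq_dom a)).
Proof. now rewrite sq_left_dom. Qed.
Lemma sq_cod_dom1 a : dom1 (dom2 (sq_cod a)) = dom1 (dom2 (sq_dom a)).
Proof. now rewrite <- sq_left_cod, <- dom1_cell, sq_left_dom. Qed.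
Lemma sq_cod_cod1 a : cod1 (dom2 (sq_cod a)) = cod1 (dom2 (sq_dom a)).
Proof. now rewrite <- sq_left_cod, <- cod1_cell, sq_left_dom. Qed.
Lemma sq_right_dom1 a : dom1 (dom2 (sq_right a)) = dom1 (dom2 (sq_dom a)).
Proof. now rewrite sq_right_dom, <- dom1_cell. Qed.
Lemma sq_right_cod1 a : cod1 (dom2 (sq_right a)) = cod1 (dom2 (sq_dom a)).
Proof. now rewrite sq_right_dom, <- cod1_cell. Qed.

Definition sq_id (t : Cell X) : Square.
Proof.
  refine (mkSquare t t (id2 (dom2 t)) (id2 (cod2 t)) _ _ _ _ _);
    rewrite ?dom2_id2, ?cod2_id2; try reflexivity.
  now rewrite vcomp_idl, vcomp_idr.
Defined.

Section VerticalComposite.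
Variables (b a : Square).
Hypothesis Eab : sq_cod a = sq_dom b.

Lemma sq_left_vcomposable : cod2 (sq_left a) = dom2 (sq_left b).
Proof. now rewrite sq_left_cod, Eab, sq_left_dom. Qed.
Lemma sq_right_vcomposable : cod2 (sq_right a) = dom2 (sq_right b).
Proof. now rewrite sq_right_cod, sq_right_dom, Eab. Qed.

Lemma sq_vcomp_commutes :
  vcomp (vcomp (sq_right b) (sq_right a)) (sq_dom a) =
  vcomp (sq_cod b) (vcomp (sq_left b) (sq_left a)).
Proof.
  rewrite <- vcomp_assoc;
    [| symmetry; apply sq_right_dom | apply sq_right_vcomposable].
  rewrite sq_commutes, Eab, vcomp_assoc;
    [| now rewrite sq_left_cod, Eab | symmetry; apply sq_right_dom].
  rewrite sq_commutes, <- vcomp_assoc;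
    [reflexivity | apply sq_left_vcomposable | apply sq_left_cod].
Qed.

Definition sq_vcomp_def : Square.
Proof.
  refine (mkSquare (sq_dom a) (sq_cod b) (vcomp (sq_left b) (sq_left a))
            (vcomp (sq_right b) (sq_right a)) _ _ _ _ sq_vcomp_commutes).
  - rewrite dom2_vcomp by apply sq_left_vcomposable; apply sq_left_dom.
  - rewrite cod2_vcomp by apply sq_left_vcomposable; apply sq_left_cod.
  - rewrite dom2_vcomp by apply sq_right_vcomposable; apply sq_right_dom.
  - rewrite cod2_vcomp by apply sq_right_vcomposable; apply sq_right_cod.
Defined.
End VerticalComposite.

Definition sq_vcomp (b a : Square) : Square :=
  if_holds (sq_vcomp_def b a) a.

Lemma sq_vcomp_eq b a (E : sq_cod a = sq_dom b) : sq_vcomp b a = sq_vcomp_def b a E.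
Proof. apply if_holds_eq. Qed.

Definition sq_hcomposable (a b : Square) : Prop :=
  cod1 (dom2 (sq_dom a)) = dom1 (dom2 (sq_dom b)).

Section HorizontalComposite.
Variables (b a : Square).
Hypothesis Eab : sq_hcomposable a b.

Lemma sq_left_hcomposable : cod1 (dom2 (sq_left a)) = dom1 (dom2 (sq_left b)).
Proof. now rewrite sq_left_cod1, sq_left_dom1. Qed.
Lemma sq_cod_hcomposable : cod1 (dom2 (sq_cod a)) = dom1 (dom2 (sq_cod b)).
Proof. now rewrite sq_cod_cod1, sq_cod_dom1. Qed.
Lemma sq_right_hcomposable : cod1 (dom2 (sq_right a)) = dom1 (dom2 (sq_right b)).
Proof. now rewrite sq_right_cod1, sq_right_dom1. Qed.

Lemma sq_hcomp_commutes :
  vcomp (hcomp (sq_right b) (sq_right a)) (hcomp (sq_dom b) (sq_dom a)) =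
  vcomp (hcomp (sq_cod b) (sq_cod a)) (hcomp (sq_left b) (sq_left a)).
Proof.
  rewrite <- !interchange; try apply sq_left_cod; try (symmetry; apply sq_right_dom);
    try assumption; try apply sq_left_hcomposable.
  now rewrite !sq_commutes.
Qed.

Definition sq_hcomp_def : Square.
Proof.
  refine (mkSquare (hcomp (sq_dom b) (sq_dom a)) (hcomp (sq_cod b) (sq_cod a))
            (hcomp (sq_left b) (sq_left a)) (hcomp (sq_right b) (sq_right a))
            _ _ _ _ sq_hcomp_commutes).
  - rewrite !dom2_hcomp by (assumption || apply sq_left_hcomposable).
    now rewrite !sq_left_dom.
  - rewrite cod2_hcomp, dom2_hcomp by (apply sq_left_hcomposable || apply sq_cod_hcomposable).
    now rewrite !sq_left_cod.
  - rewrite dom2_hcomp, cod2_hcomp by (assumption || apply sq_right_hcomposable).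
    now rewrite !sq_right_dom.
  - rewrite !cod2_hcomp by (apply sq_right_hcomposable || apply sq_cod_hcomposable).
    now rewrite !sq_right_cod.
Defined.
End HorizontalComposite.

Definition sq_hcomp (b a : Square) : Square :=
  if_holds (sq_hcomp_def b a) a.

Lemma sq_hcomp_eq b a (E : sq_hcomposable a b) : sq_hcomp b a = sq_hcomp_def b a E.
Proof. apply if_holds_eq. Qed.

Lemma sq_vcomp_assoc c b a : sq_cod a = sq_dom b -> sq_cod b = sq_dom c ->
  sq_vcomp c (sq_vcomp b a) = sq_vcomp (sq_vcomp c b) a.
Proof.
  intros E1 E2.
  rewrite (sq_vcomp_eq b a E1), (sq_vcomp_eq c b E2),
    (sq_vcomp_eq c (sq_vcomp_def b a E1) E2),
    (sq_vcomp_eq (sq_vcomp_def c b E2) a E1).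
  apply square_eq; simpl; try reflexivity;
    apply vcomp_assoc; (apply sq_left_vcomposable || apply sq_right_vcomposable); assumption.
Qed.

Lemma sq_vcomp_idl a : sq_vcomp (sq_id (sq_cod a)) a = a.
Proof.
  rewrite (sq_vcomp_eq (sq_id (sq_cod a)) a eq_refl).
  apply square_eq; simpl; try reflexivity.
  - rewrite <- sq_left_cod; apply vcomp_idl.
  - rewrite <- sq_right_cod; apply vcomp_idl.
Qed.

Lemma sq_vcomp_idr a : sq_vcomp a (sq_id (sq_dom a)) = a.
Proof.
  rewrite (sq_vcomp_eq a (sq_id (sq_dom a)) eq_refl).
  apply square_eq; simpl; try reflexivity.
  - rewrite <- sq_left_dom; apply vcomp_idr.
  - rewrite <- sq_right_dom; apply vcomp_idr.
Qed.

Lemma sq_hcomp_assoc c b a : sq_hcomposable a b -> sq_hcomposable b c ->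
  sq_hcomp c (sq_hcomp b a) = sq_hcomp (sq_hcomp c b) a.
Proof.
  intros E1 E2.
  assert (E3 : sq_hcomposable (sq_hcomp_def b a E1) c).
  { unfold sq_hcomposable; simpl. now rewrite dom2_hcomp, cod1_comp1. }
  assert (E4 : sq_hcomposable a (sq_hcomp_def c b E2)).
  { unfold sq_hcomposable; simpl. now rewrite dom2_hcomp, dom1_comp1. }
  rewrite (sq_hcomp_eq b a E1), (sq_hcomp_eq c b E2),
    (sq_hcomp_eq c _ E3), (sq_hcomp_eq _ a E4).
  apply square_eq; simpl; apply hcomp_assoc;
    (assumption || apply sq_cod_hcomposable || apply sq_left_hcomposable
     || apply sq_right_hcomposable); assumption.
Qed.

Lemma sq_hcomp_idl a : sq_hcomp (sq_id (id2 (id1 (cod1 (dom2 (sq_dom a)))))) a = a.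
Proof.
  assert (E : sq_hcomposable a (sq_id (id2 (id1 (cod1 (dom2 (sq_dom a))))))).
  { unfold sq_hcomposable; simpl. now rewrite dom2_id2, dom1_id1. }
  rewrite (sq_hcomp_eq _ a E).
  apply square_eq; simpl.
  - apply hcomp_idl.
  - rewrite <- sq_cod_cod1; apply hcomp_idl.
  - rewrite dom2_id2, <- sq_left_cod1; apply hcomp_idl.
  - rewrite cod2_id2, <- sq_right_cod1; apply hcomp_idl.
Qed.

Lemma sq_hcomp_idr a : sq_hcomp a (sq_id (id2 (id1 (dom1 (dom2 (sq_dom a)))))) = a.
Proof.
  assert (E : sq_hcomposable (sq_id (id2 (id1 (dom1 (dom2 (sq_dom a)))))) a).
  { unfold sq_hcomposable; simpl. now rewrite dom2_id2, cod1_id1. }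
  rewrite (sq_hcomp_eq a _ E).
  apply square_eq; simpl.
  - apply hcomp_idr.
  - rewrite <- sq_cod_dom1; apply hcomp_idr.
  - rewrite dom2_id2, <- sq_left_dom1; apply hcomp_idr.
  - rewrite cod2_id2, <- sq_right_dom1; apply hcomp_idr.
Qed.

Lemma sq_hcomp_id (g f : Cell X) : cod1 (dom2 f) = dom1 (dom2 g) ->
  sq_hcomp (sq_id g) (sq_id f) = sq_id (hcomp g f).
Proof.
  intro E. rewrite (sq_hcomp_eq (sq_id g) (sq_id f) E).
  apply square_eq; simpl; try reflexivity.
  - rewrite dom2_hcomp by exact E; now apply hcomp_id2.
  - rewrite cod2_hcomp by exact E; apply hcomp_id2, hcomposable_cod2, E.
Qed.

Lemma sq_interchange b' b a' a : sq_cod a = sq_dom a' -> sq_cod b = sq_dom b' ->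
  sq_hcomposable a b ->
  sq_hcomp (sq_vcomp b' b) (sq_vcomp a' a) = sq_vcomp (sq_hcomp b' a') (sq_hcomp b a).
Proof.
  intros Ea Eb E.
  assert (E' : sq_hcomposable a' b').
  { unfold sq_hcomposable. now rewrite <- Ea, <- Eb, sq_cod_cod1, sq_cod_dom1. }
  assert (E'' : sq_cod (sq_hcomp_def b a E) = sq_dom (sq_hcomp_def b' a' E')).
  { simpl. now rewrite Ea, Eb. }
  rewrite (sq_vcomp_eq b' b Eb), (sq_vcomp_eq a' a Ea), (sq_hcomp_eq b a E),
    (sq_hcomp_eq b' a' E'), (sq_hcomp_eq (sq_vcomp_def b' b Eb) (sq_vcomp_def a' a Ea) E),
    (sq_vcomp_eq _ _ E'').
  apply square_eq; simpl; try reflexivity; apply interchange;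
    (apply sq_left_vcomposable || apply sq_right_vcomposable
     || apply sq_left_hcomposable || apply sq_right_hcomposable); assumption.
Qed.

Definition Squares : TwoCat.
Proof.
  refine {| Ob := Ob X; Hom := Cell X; Cell := Square;
     dom1 := fun t => dom1 (dom2 t); cod1 := fun t => cod1 (dom2 t);
     dom2 := sq_dom; cod2 := sq_cod;
     id1 := fun x => id2 (id1 x); comp1 := hcomp; id2 := sq_id;
     vcomp := sq_vcomp; hcomp := sq_hcomp;
     comp1_assoc := hcomp_assoc X; comp1_idl := hcomp_idl X; comp1_idr := hcomp_idr X;
     dom2_id2 := fun f => eq_refl; cod2_id2 := fun f => eq_refl;
     vcomp_assoc := sq_vcomp_assoc; vcomp_idl := sq_vcomp_idl; vcomp_idr := sq_vcomp_idr;
     hcomp_assoc := sq_hcomp_assoc; hcomp_idl := sq_hcomp_idl; hcomp_idr := sq_hcomp_idr;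
     hcomp_id2 := sq_hcomp_id; interchange := sq_interchange |}.
  - intros x; now rewrite dom2_id2, dom1_id1.
  - intros x; now rewrite dom2_id2, cod1_id1.
  - intros g f E; now rewrite dom2_hcomp, dom1_comp1.
  - intros g f E; now rewrite dom2_hcomp, cod1_comp1.
  - intros a; symmetry; apply sq_cod_dom1.
  - intros a; symmetry; apply sq_cod_cod1.
  - intros b a E; now rewrite (sq_vcomp_eq b a E).
  - intros b a E; now rewrite (sq_vcomp_eq b a E).
  - intros b a E; now rewrite (sq_hcomp_eq b a E).
  - intros b a E; now rewrite (sq_hcomp_eq b a E).
Defined.

Definition sq_proj_left : TwoFunData Squares X :=
  Build_TwoFunData Squares X (fun x => x) dom2 sq_left.
Definition sq_proj_right : TwoFunData Squares X :=
  Build_TwoFunData Squares X (fun x => x) cod2 sq_right.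

Lemma sq_proj_left_2functor : is_2functor sq_proj_left.
Proof.
  repeat split; simpl; intros; try reflexivity.
  - apply sq_left_dom.
  - apply sq_left_cod.
  - apply dom2_id2.
  - now apply dom2_hcomp.
  - now rewrite (sq_vcomp_eq _ _ H).
  - now rewrite (sq_hcomp_eq _ _ H).
Qed.

Lemma sq_proj_right_2functor : is_2functor sq_proj_right.
Proof.
  repeat split; simpl; intros; try reflexivity.
  - symmetry; apply dom1_cell.
  - symmetry; apply cod1_cell.
  - apply sq_right_dom.
  - apply sq_right_cod.
  - apply cod2_id2.
  - now apply cod2_hcomp.
  - now rewrite (sq_vcomp_eq _ _ H).
  - now rewrite (sq_hcomp_eq _ _ H).
Qed.

Lemma squares_2functor_icon {L : TwoCat} (K : TwoFunData L Squares) :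
  is_2functor K -> is_icon (tfcomp sq_proj_left K) (tfcomp sq_proj_right K) (F1 K).
Proof.
  intros (_ & _ & k3 & k4 & k5 & k6 & _); repeat split; simpl; intros.
  - rewrite k5; simpl. now rewrite dom2_id2.
  - now apply k6.
  - rewrite <- k3, <- k4; apply sq_commutes.
Qed.
End Squares.

Section IconLift.
Variables (L X : TwoCat) (H H' : TwoFunData L X) (t : Hom L -> Cell X).
Hypotheses (hH : is_2functor H) (hH' : is_2functor H') (t_icon : is_icon H H' t).

Definition icon_square (s : Cell L) : Square X.
Proof.
  refine (mkSquare X (t (dom2 s)) (t (cod2 s)) (F2 H s) (F2 H' s) _ _ _ _ _);
    destruct hH as (_ & _ & h3 & h4 & _), hH' as (_ & _ & k3 & k4 & _),
      t_icon as (_ & i2 & i3 & _ & _ & i6).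
  - now rewrite h3, i2.
  - now rewrite h4, i2.
  - now rewrite k3, i3.
  - now rewrite k4, i3.
  - apply i6.
Defined.

Definition icon_lift : TwoFunData L (Squares X) :=
  Build_TwoFunData L (Squares X) (F0 H) t icon_square.

Lemma icon_lift_2functor : is_2functor icon_lift.
Proof.
  destruct hH as (h1 & h2 & h3 & h4 & h5 & h6 & h7 & h8 & h9),
    hH' as (k1 & k2 & k3 & k4 & k5 & k6 & k7 & k8 & k9),
    t_icon as (i1 & i2 & i3 & i4 & i5 & i6).
  repeat split; simpl; intros.
  - now rewrite i2, h1.
  - now rewrite i2, h2.
  - now rewrite i4, h5.
  - now apply i5.
  - apply square_eq; simpl; now rewrite ?dom2_id2, ?cod2_id2, ?h7, ?k7, ?i2, ?i3.
  - assert (E : sq_cod X (icon_square a) = sq_dom X (icon_square b))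
      by (simpl; now rewrite H0).
    rewrite (sq_vcomp_eq X _ _ E).
    apply square_eq; simpl.
    + now rewrite dom2_vcomp.
    + now rewrite cod2_vcomp.
    + now apply h8.
    + now apply k8.
  - assert (E : sq_hcomposable X (icon_square a) (icon_square b))
      by (unfold sq_hcomposable; simpl; now rewrite !i2, h2, h1, H0).
    rewrite (sq_hcomp_eq X _ _ E).
    apply square_eq; simpl.
    + rewrite dom2_hcomp by assumption; now apply i5.
    + rewrite cod2_hcomp by assumption; now apply i5, hcomposable_cod2.
    + now apply h9.
    + now apply k9.
Qed.
End IconLift.

Definition ld_underlying {C : Category} {X : TwoCat} (r : TwoFunData (LD C) X) :
  FunData C (U X) := Build_FunData C (U X) (F0 r) (F1 r).

Lemma ld_underlying_functor {C : Category} {X : TwoCat} (r : TwoFunData (LD C) X) :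
  is_2functor r -> is_functor (ld_underlying r).
Proof. intros (r1 & r2 & _ & _ & r5 & r6 & _); repeat split; assumption. Qed.

Lemma qof_2functor {C : Category} {L : TwoCat} (e : FunData C (U L)) :
  is_functor e -> is_2functor (qof e).
Proof.
  intros (e1 & e2 & e3 & e4); repeat split; simpl; intros.
  - apply e1.
  - apply e2.
  - apply dom2_id2.
  - apply cod2_id2.
  - apply e3.
  - now apply e4.
  - subst. now rewrite <- (cod2_id2 L (fa e b)) at 2; rewrite vcomp_idl.
  - rewrite e4 by assumption. symmetry; apply hcomp_id2.
    simpl in *. now rewrite e2, e1, H.
Qed.

(* 2-cells of a locally discrete 2-category are identities, so a 2-functor
   out of it is determined by its underlying functor. *)
Lemma tfcomp_qof {C : Category} {L X : TwoCat} (e : FunData C (U L))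
    (H : TwoFunData L X) (r : TwoFunData (LD C) X) :
  is_2functor H -> is_2functor r -> fcomp (Ufun H) e = ld_underlying r ->
  tfcomp H (qof e) = r.
Proof.
  intros (_ & _ & _ & _ & _ & _ & h7 & _) (_ & _ & _ & _ & _ & _ & r7 & _) E.
  apply two_fun_data_ext; intros; simpl.
  - exact (fo_congr E x).
  - exact (fa_congr E f).
  - pose proof (fa_congr E a) as Ea; simpl in Ea.
    rewrite h7, Ea. symmetry; exact (r7 a).
Qed.

Lemma der_fa_a00 {S : Type} {C : Category} (F : FunData (DerCat S) C) (s : S) :
  is_functor F -> fa F (s, a00) = cid C (fo F (s, false)).
Proof. intros (_ & _ & F3 & _). exact (F3 (s, false)). Qed.

Lemma der_fa_a11 {S : Type} {C : Category} (F : FunData (DerCat S) C) (s : S) :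
  is_functor F -> fa F (s, a11) = cid C (fo F (s, true)).
Proof. intros (_ & _ & F3 & _). exact (F3 (s, true)). Qed.

Section FreeTwoCategory.
Variables (d : DerScheme) (L : TwoCat) (e : FunData (dC d) (U L)) (e2 : dS d -> Cell L).
Hypothesis free : is_free d L e e2.

Lemma free_functor : is_functor e.
Proof. apply free. Qed.

Lemma free_gen_dom al : dom2 (e2 al) = fa e (sder d al).
Proof. apply free. Qed.

Lemma free_gen_cod al : cod2 (e2 al) = fa e (tder d al).
Proof. apply free. Qed.

Lemma free_lift (X : TwoCat) (G1 : FunData (dC d) (U X)) (G2 : dS d -> Cell X) :
  is_functor G1 ->
  (forall al, dom2 (G2 al) = fa G1 (sder d al) /\ cod2 (G2 al) = fa G1 (tder d al)) ->
  exists H : TwoFunData L X,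
    is_2functor H /\ fcomp (Ufun H) e = G1 /\ forall al, F2 H (e2 al) = G2 al.
Proof.
  intros HG1 HG2. destruct free as (_ & _ & lift).
  destruct (lift X G1 G2 HG1 HG2) as (H & ? & ? & ? & _). now exists H.
Qed.

Lemma free_ext (X : TwoCat) (H H' : TwoFunData L X) :
  is_2functor H -> is_2functor H' -> fcomp (Ufun H) e = fcomp (Ufun H') e ->
  (forall al, F2 H (e2 al) = F2 H' (e2 al)) -> H = H'.
Proof.
  intros hH hH' E1 E2. destruct free as (_ & _ & lift).
  destruct (lift X (fcomp (Ufun H) e) (fun al => F2 H (e2 al))) as (H0 & _ & _ & _ & uniq).
  - apply fcomp_functor; [apply free_functor | now apply Ufun_functor].
  - intros al. destruct hH as (_ & _ & h3 & h4 & _).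
    now rewrite h3, h4, free_gen_dom, free_gen_cod.
  - rewrite (uniq H hH eq_refl (fun al => eq_refl)). symmetry; now apply uniq.
Qed.

Lemma free_gen_dom1 al : dom1 (dom2 (e2 al)) = fo e (fo (dd1 d) (al, false)).
Proof.
  rewrite free_gen_dom; unfold sder.
  destruct free_functor as (e1 & _), (dd1_ok d) as (d1 & _).
  exact (eq_trans (e1 _) (f_equal (fo e) (d1 _))).
Qed.

Lemma free_gen_cod1 al : cod1 (dom2 (e2 al)) = fo e (fo (dd1 d) (al, true)).
Proof.
  rewrite free_gen_dom; unfold sder.
  destruct free_functor as (_ & e2' & _), (dd1_ok d) as (_ & d2 & _).
  exact (eq_trans (e2' _) (f_equal (fo e) (d2 _))).
Qed.

Lemma lamof_a00 al : lamof d e e2 (al, a00) = id2 (id1 (fo e (fo (dd1 d) (al, false)))).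
Proof.
  unfold lamof; simpl. rewrite (der_fa_a00 (dd1 d) al (dd1_ok d)).
  f_equal; apply free_functor.
Qed.

Lemma lamof_a11 al : lamof d e e2 (al, a11) = id2 (id1 (fo e (fo (dd1 d) (al, true)))).
Proof.
  unfold lamof; simpl. rewrite (der_fa_a11 (dd1 d) al (dd1_ok d)).
  f_equal; apply free_functor.
Qed.

Lemma lamof_dom f : dom2 (lamof d e e2 f) = fa e (fa (dd1 d) f).
Proof. destruct f as [al []]; simpl; apply dom2_id2 || apply free_gen_dom. Qed.

Lemma lamof_cod f : cod2 (lamof d e e2 f) = fa e (fa (dd0 d) f).
Proof.
  destruct f as [al []]; [rewrite lamof_a00 | apply free_gen_cod | rewrite lamof_a11];
    rewrite cod2_id2; [rewrite (der_fa_a00 (dd0 d) al (dd0_ok d))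
                      | rewrite (der_fa_a11 (dd0 d) al (dd0_ok d))];
    rewrite dd_agree; symmetry; apply free_functor.
Qed.

Lemma lamof_icon : is_icon (tfcomp (qof e) (LDfun (dd1 d))) (tfcomp (qof e) (LDfun (dd0 d)))
  (lamof d e e2).
Proof.
  repeat split.
  - intros x; simpl; now rewrite dd_agree.
  - apply lamof_dom.
  - apply lamof_cod.
  - now intros [al []].
  - intros [al' g] [al f] E; simpl in E; injection E as <- Efg.
    destruct g, f; simpl in Efg; try discriminate; simpl.
    + rewrite lamof_a00. symmetry; apply hcomp_id1l.
      now rewrite dom2_id2, cod1_id1.
    + rewrite lamof_a00. symmetry; apply hcomp_id1r, free_gen_dom1.
    + rewrite lamof_a11. symmetry; apply hcomp_id1l, free_gen_cod1.
    + rewrite lamof_a11. symmetry; apply hcomp_id1l.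
      now rewrite dom2_id2, cod1_id1.
  - intros f; simpl.
    now rewrite <- lamof_cod, <- lamof_dom, vcomp_idl, vcomp_idr.
Qed.

Lemma F2_lamof (X : TwoCat) (H : TwoFunData L X) (r : TwoFunData (LD (dC d)) X)
    (rho : Hom (LD (DerCat (dS d))) -> Cell X) :
  is_2functor H -> fcomp (Ufun H) e = ld_underlying r ->
  is_icon (tfcomp r (LDfun (dd1 d))) (tfcomp r (LDfun (dd0 d))) rho ->
  (forall al, F2 H (e2 al) = rho (al, a01)) ->
  forall f, F2 H (lamof d e e2 f) = rho f.
Proof.
  intros (_ & _ & _ & _ & _ & _ & h7 & _) He (_ & _ & _ & i4 & _) Hgen [al []];
    unfold lamof; simpl; try apply Hgen;
    rewrite h7; [pose proof (i4 (al, false)) as Hid | pose proof (i4 (al, true)) as Hid];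
    simpl in Hid; rewrite Hid; f_equal; exact (fa_congr He _).
Qed.

Lemma free_coinserter_factor (X : TwoCat) (r : TwoFunData (LD (dC d)) X)
    (rho : Hom (LD (DerCat (dS d))) -> Cell X) :
  is_2functor r -> is_icon (tfcomp r (LDfun (dd1 d))) (tfcomp r (LDfun (dd0 d))) rho ->
  exists H : TwoFunData L X,
    is_2functor H /\ tfcomp H (qof e) = r /\ (forall f, F2 H (lamof d e e2 f) = rho f) /\
    (forall H' : TwoFunData L X, is_2functor H' -> tfcomp H' (qof e) = r ->
        (forall f, F2 H' (lamof d e e2 f) = rho f) -> H' = H).
Proof.
  intros hr rho_icon.
  destruct (free_lift X (ld_underlying r) (fun al => rho (al, a01)))
    as (H & hH & He & Hgen).
  - now apply ld_underlying_functor.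
  - destruct rho_icon as (_ & i2 & i3 & _). split; [apply i2 | apply i3].
  - exists H; split; [exact hH |]; split; [now apply tfcomp_qof |]; split.
    + now apply (F2_lamof X H r).
    + intros H' hH' Eq' Elam'. apply (free_ext X); try assumption.
      * now rewrite He, <- Eq'.
      * intros al. rewrite Hgen. exact (Elam' (al, a01)).
Qed.

Lemma free_icon_ext (X : TwoCat) (H H' : TwoFunData L X) (t1 t2 : Hom L -> Cell X) :
  is_2functor H -> is_2functor H' -> is_icon H H' t1 -> is_icon H H' t2 ->
  (forall g, t1 (fa e g) = t2 (fa e g)) -> forall f, t1 f = t2 f.
Proof.
  intros hH hH' I1 I2 Hag f.
  assert (E : icon_lift L X H H' t1 hH hH' I1 = icon_lift L X H H' t2 hH hH' I2).
  { apply (free_ext (Squares X)); try apply icon_lift_2functor.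
    - apply fun_data_ext; intros; simpl; [reflexivity | apply Hag].
    - intros al. apply square_eq; simpl; try reflexivity.
      + rewrite free_gen_dom. apply Hag.
      + rewrite free_gen_cod. apply Hag. }
  exact (f_equal (fun K => F1 K f) E).
Qed.

Section IconExtension.
Variables (X : TwoCat) (H H' : TwoFunData L X) (t' : Hom (LD (dC d)) -> Cell X).
Hypotheses (hH : is_2functor H) (hH' : is_2functor H')
  (t'_icon : is_icon (tfcomp H (qof e)) (tfcomp H' (qof e)) t')
  (t'_lamof : forall f, vcomp (F2 H' (lamof d e e2 f)) (t' (F1 (LDfun (dd1 d)) f)) =
                        vcomp (t' (F1 (LDfun (dd0 d)) f)) (F2 H (lamof d e e2 f))).

Definition gen_square (al : dS d) : Square X.
Proof.
  refine (mkSquare X (t' (sder d al)) (t' (tder d al)) (F2 H (e2 al)) (F2 H' (e2 al))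
            _ _ _ _ (t'_lamof (al, a01)));
    destruct hH as (_ & _ & h3 & h4 & _), hH' as (_ & _ & k3 & k4 & _),
      t'_icon as (_ & i2 & i3 & _).
  - now rewrite h3, free_gen_dom, i2.
  - now rewrite h4, free_gen_cod, i2.
  - now rewrite k3, free_gen_dom, i3.
  - now rewrite k4, free_gen_cod, i3.
Defined.

Lemma free_icon_exists :
  exists t : Hom L -> Cell X, is_icon H H' t /\ forall g, t (F1 (qof e) g) = t' g.
Proof.
  pose proof (tfcomp_2functor H (qof e) (qof_2functor e free_functor) hH) as hHq.
  pose proof (tfcomp_2functor H' (qof e) (qof_2functor e free_functor) hH') as hH'q.
  set (t'_lift := icon_lift (LD (dC d)) X _ _ t' hHq hH'q t'_icon).
  destruct (free_lift (Squares X) (ld_underlying t'_lift) gen_square)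
    as (K & hK & Ke & Kgen).
  - apply ld_underlying_functor, icon_lift_2functor.
  - now split.
  - assert (EH : tfcomp (sq_proj_left X) K = H).
    { apply (free_ext X); try assumption.
      - apply tfcomp_2functor; [exact hK | apply sq_proj_left_2functor].
      - apply fun_data_ext; intros; simpl.
        + exact (fo_congr Ke x).
        + change (dom2 (fa (fcomp (Ufun K) e) f) = F1 H (fa e f)).
          rewrite (fa_congr Ke f). apply t'_icon.
      - intros al; simpl. now rewrite Kgen. }
    assert (EH' : tfcomp (sq_proj_right X) K = H').
    { apply (free_ext X); try assumption.
      - apply tfcomp_2functor; [exact hK | apply sq_proj_right_2functor].
      - apply fun_data_ext; intros; simpl.
        + change (fo (fcomp (Ufun K) e) x = F0 H' (fo e x)).
          rewrite (fo_congr Ke x). apply t'_icon.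
        + change (cod2 (fa (fcomp (Ufun K) e) f) = F1 H' (fa e f)).
          rewrite (fa_congr Ke f). apply t'_icon.
      - intros al; simpl. now rewrite Kgen. }
    exists (F1 K); split.
    + rewrite <- EH, <- EH'. now apply squares_2functor_icon.
    + exact (fa_congr Ke).
Qed.
End IconExtension.

Lemma free_is_coinserter :
  is_coinserter (LDfun (dd1 d)) (LDfun (dd0 d)) L (qof e) (lamof d e e2).
Proof.
  split; [exact (qof_2functor e free_functor) |]. split; [exact lamof_icon |].
  intros X; split; [exact (free_coinserter_factor X) |].
  intros H H' hH hH'; split.
  - intros t1 t2 I1 I2. now apply (free_icon_ext X H H').
  - intros t' It' Hlam. now apply (free_icon_exists X H H' t').
Qed.
End FreeTwoCategory.

Lemma scheme_mor_sder (d d' : DerScheme) h k al :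
  is_scheme_mor d d' h k -> fa h (sder d al) = sder d' (k al).
Proof. intros (_ & _ & E1). exact (fa_congr E1 (al, a01)). Qed.

Lemma scheme_mor_tder (d d' : DerScheme) h k al :
  is_scheme_mor d d' h k -> fa h (tder d al) = tder d' (k al).
Proof. intros (_ & E0 & _). exact (fa_congr E0 (al, a01)). Qed.

Lemma free_map_unique (d d' : DerScheme) (L L' : TwoCat)
    (e : FunData (dC d) (U L)) (e2 : dS d -> Cell L)
    (e' : FunData (dC d') (U L')) (e2' : dS d' -> Cell L')
    (h : FunData (dC d) (dC d')) (k : dS d -> dS d') :
  is_free d L e e2 -> is_free d' L' e' e2' -> is_scheme_mor d d' h k ->
  exists G : TwoFunData L L', is_2functor G /\ is_over e e2 e' e2' G h k /\
    (forall G' : TwoFunData L L', is_2functor G' -> is_over e e2 e' e2' G' h k -> G' = G).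
Proof.
  intros free free' hk.
  destruct (free_lift d L e e2 free L' (fcomp e' h) (fun al => e2' (k al)))
    as (G & hG & Ge & Ggen).
  - apply fcomp_functor; [apply hk | apply (free_functor d' L' e' e2' free')].
  - intros al; simpl.
    rewrite (scheme_mor_sder d d' h k al hk), (scheme_mor_tder d d' h k al hk).
    split; [apply (free_gen_dom d' L' e' e2' free') | apply (free_gen_cod d' L' e' e2' free')].
  - exists G; split; [exact hG |]; split; [now split |].
    intros G' hG' (G'e & G'gen). apply (free_ext d L e e2 free); try assumption.
    + now rewrite G'e, Ge.
    + intros al; now rewrite G'gen, Ggen.
Qed.

Lemma is_over_id (d : DerScheme) (L : TwoCat) (e : FunData (dC d) (U L))
    (e2 : dS d -> Cell L) :
  is_over e e2 e e2 (tfid L) (fid (dC d)) (fun al => al).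
Proof. now split. Qed.

Lemma is_over_comp (d d' d'' : DerScheme) (L L' L'' : TwoCat)
    (e : FunData (dC d) (U L)) (e2 : dS d -> Cell L)
    (e' : FunData (dC d') (U L')) (e2' : dS d' -> Cell L')
    (e'' : FunData (dC d'') (U L'')) (e2'' : dS d'' -> Cell L'')
    (h : FunData (dC d) (dC d')) (k : dS d -> dS d')
    (h' : FunData (dC d') (dC d'')) (k' : dS d' -> dS d'')
    (G : TwoFunData L L') (G' : TwoFunData L' L'') :
  is_over e e2 e' e2' G h k -> is_over e' e2' e'' e2'' G' h' k' ->
  is_over e e2 e'' e2'' (tfcomp G' G) (fcomp h' h) (fun al => k' (k al)).
Proof.
  intros (Ge & Ggen) (G'e & G'gen); split.
  - apply fun_data_ext; intros; simpl.
    + exact (eq_trans (f_equal (F0 G') (fo_congr Ge x)) (fo_congr G'e (fo h x))).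
    + exact (eq_trans (f_equal (F1 G') (fa_congr Ge f)) (fa_congr G'e (fa h f))).
  - intros al; simpl. now rewrite Ggen, G'gen.
Qed.

Lemma tfid_2functor (A : TwoCat) : is_2functor (tfid A).
Proof. now repeat split. Qed.

Theorem mainTheorem1 :
  (forall (d : DerScheme) (L : TwoCat) (e : FunData (dC d) (U L)) (e2 : dS d -> Cell L),
      is_free d L e e2 ->
      is_coinserter (LDfun (dd1 d)) (LDfun (dd0 d)) L (qof e) (lamof d e e2)) /\
  (forall (d d' : DerScheme) (L L' : TwoCat)
          (e : FunData (dC d) (U L)) (e2 : dS d -> Cell L)
          (e' : FunData (dC d') (U L')) (e2' : dS d' -> Cell L')
          (h : FunData (dC d) (dC d')) (k : dS d -> dS d'),
      is_free d L e e2 -> is_free d' L' e' e2' -> is_scheme_mor d d' h k ->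
      exists G : TwoFunData L L', is_2functor G /\ is_over e e2 e' e2' G h k /\
        (forall G' : TwoFunData L L', is_2functor G' -> is_over e e2 e' e2' G' h k ->
            G' = G)) /\
  (forall (d : DerScheme) (L : TwoCat) (e : FunData (dC d) (U L)) (e2 : dS d -> Cell L),
      is_free d L e e2 ->
      is_2functor (tfid L) /\ is_over e e2 e e2 (tfid L) (fid (dC d)) (fun al => al)) /\
  (forall (d d' d'' : DerScheme) (L L' L'' : TwoCat)
          (e : FunData (dC d) (U L)) (e2 : dS d -> Cell L)
          (e' : FunData (dC d') (U L')) (e2' : dS d' -> Cell L')
          (e'' : FunData (dC d'') (U L'')) (e2'' : dS d'' -> Cell L'')
          (h : FunData (dC d) (dC d')) (k : dS d -> dS d')
          (h' : FunData (dC d') (dC d'')) (k' : dS d' -> dS d'')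
          (G : TwoFunData L L') (G' : TwoFunData L' L''),
      is_free d L e e2 -> is_free d' L' e' e2' -> is_free d'' L'' e'' e2'' ->
      is_scheme_mor d d' h k -> is_scheme_mor d' d'' h' k' ->
      is_2functor G -> is_over e e2 e' e2' G h k ->
      is_2functor G' -> is_over e' e2' e'' e2'' G' h' k' ->
      is_2functor (tfcomp G' G) /\
      is_over e e2 e'' e2'' (tfcomp G' G) (fcomp h' h) (fun al => k' (k al))).
Proof.
  split; [exact free_is_coinserter |].
  split; [exact free_map_unique |].
  split.
  - intros d L e e2 _. split; [apply tfid_2functor | apply is_over_id].
  - intros d d' d'' L L' L'' e e2 e' e2' e'' e2'' h k h' k' G G'
      _ _ _ _ _ hG oG hG' oG'.
    split; [now apply tfcomp_2functor | now apply (is_over_comp d d' d'' L L' L'' e e2 e' e2')].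
Qed.
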